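(* Let $n,m\ge 1$, $Q\in\mathbb{R}^{n\times n}$ symmetric positive definite, $A\in\mathbb{R}^{m\times n}$, $b\in\mathbb{R}^m$, $c\in\mathbb{R}^n$, and suppose the problem $$\min_{x\in\mathbb{R}^n}\ \tfrac12 x^\intercal Q x + c^\intercal x \quad\text{s.t.}\quad Ax\preceq b \qquad (P(Q,A,b,c))$$ is feasible, with (unique) optimal solution $x^\ast$. Let integers $0\le \bar m\le m$ and $0\le \bar n\le n$ be given and partition $$A=\begin{bmatrix} A_1\\ A_{21}\ \ A_{22}\end{bmatrix},\qquad A_1\in\mathbb{R}^{\bar m\times n},\ A_{21}\in\mathbb{R}^{(m-\bar m)\times \bar n},\ A_{22}\in\mathbb{R}^{(m-\bar m)\times(n-\bar n)}.$$ Consider an adversary (a coalition of the target node with some agents) that knows $Q$, $A$, $x^\ast$, the entries $b_1,\dots,b_{\bar m}$ and the entries $c_1,\dots,c_{\bar n}$. Then: (1) If $\bar m<m$ and there exists $\delta\in\mathbb{R}^{m-\bar m}$ with $\delta\neq 0$, $\delta\succeq 0$ and $A_{21}^\intercal\delta=0$, then $b$ cannot be uniquely retrieved by the adversary: there exist $b'\in\mathbb{R}^m$ with $b'\neq b$ and $c'\in\mathbb{R}^n$ such that $b'_j=b_j$ for all $j\le\bar m$, $c'_j=c_j$ for all $j\le \bar n$, and $x^\ast$ is the optimal solution of $P(Q,A,b',c')$. (2) If, in addition to the hypotheses of (1), $\bar n<n$ and $A_{22}^\intercal\delta\neq 0$, then $c$ cannot be uniquely retrieved by the adversary: there exist $c'\in\mathbb{R}^n$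 with $c'\neq c$ and $b'\in\mathbb{R}^m$ such that $b'_j=b_j$ for all $j\le\bar m$, $c'_j=c_j$ for all $j\le \bar n$, and $x^\ast$ is the optimal solution of $P(Q,A,b',c')$.
   Context: Vector inequalities $\preceq,\succeq$ are element-wise. The setting is a protocol that, given private data $b$ and $c$ held by agents and matrices $Q,A$ (here public), outputs the optimal solution $x^\ast$ of the quadratic program to a target node. Following the paper's notion of non-unique retrieval, a private input cannot be uniquely retrieved by an adversary if there are at least two values of it, each consistent (together with some values of the other unknown private data) with everything the adversary knows; here ''consistent'' means agreeing with the known entries and yielding the same optimal solution $x^\ast$. *)

From HB Require Import structures.
From mathcomp Require Import all_boot all_order all_algebra.
From mathcomp Require Import reals.
Set Implicit Arguments. Unset Strict Implicit. Unset Printing Implicit Defensive.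
Import Order.TTheory GRing.Theory Num.Theory.
Local Open Scope ring_scope.

Definition sym_posdef (R : realType) (n : nat) (Q : 'M[R]_n) : Prop :=
  Q^T = Q /\ forall x : 'cV[R]_n, x != 0 -> 0 < (x^T *m Q *m x) 0 0.

Definition qp_obj (R : realType) (n : nat) (Q : 'M[R]_n) (c x : 'cV[R]_n) : R :=
  (x^T *m Q *m x) 0 0 / 2 + (c^T *m x) 0 0.

Definition qp_feasible (R : realType) (m n : nat) (A : 'M[R]_(m, n))
  (b : 'cV[R]_m) (x : 'cV[R]_n) : Prop :=
  forall i : 'I_m, (A *m x) i 0 <= b i 0.

Definition qp_optimal (R : realType) (m n : nat) (Q : 'M[R]_n) (A : 'M[R]_(m, n))
  (b : 'cV[R]_m) (c : 'cV[R]_n) (x : 'cV[R]_n) : Prop :=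
  qp_feasible A b x /\
  forall y : 'cV[R]_n, qp_feasible A b y -> qp_obj Q c x <= qp_obj Q c y.

(* By the KKT conditions, [x] is optimal for P(Q,A,b,c) iff there is a multiplier
   [lam >= 0], supported on the constraints active at [x], with
   [Q x + c + A^T lam = 0]; necessity is proved via Farkas' lemma.  Replacing
   [lam] by [lam + s delta] and [c] by [c - s A^T delta] preserves stationarity,
   and leaves [c_j] unchanged wherever [(A^T delta)_j = 0], in particular for
   [j < nbar].  For (1), the ratio test [s = - min lam_i / delta_i] (over
   [delta_i > 0]) kills the multiplier of some row [k >= mbar], whose bound [b_k]
   can then be raised.  For (2), [s = 1] changes [c] because [A22^T delta <> 0];
   the rows in the support of [delta] are made active by setting [b_i = (A x)_i]. *)

From HB Require Import structures.
From mathcomp Require Import all_boot all_order all_algebra.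
From mathcomp Require Import reals.
From mathcomp Require Import ring lra.
Import Order.TTheory GRing.Theory Num.Theory.
Local Open Scope ring_scope.

Set Implicit Arguments. Unset Strict Implicit. Unset Printing Implicit Defensive.

Section Dot.
Variable R : realFieldType.

Definition dot n (u v : 'cV[R]_n) : R := (u^T *m v) 0 0.

Lemma dotE n (u v : 'cV[R]_n) : dot u v = \sum_i u i 0 * v i 0.
Proof. by rewrite /dot mxE; apply: eq_bigr => i _; rewrite mxE. Qed.

Lemma dotC n (u v : 'cV[R]_n) : dot u v = dot v u.
Proof. by rewrite !dotE; apply: eq_bigr => i _; rewrite mulrC. Qed.

Lemma dotDl n (u v w : 'cV[R]_n) : dot (u + v) w = dot u w + dot v w.
Proof. by rewrite /dot linearD mulmxDl mxE. Qed.

Lemma dotZl n k (u w : 'cV[R]_n) : dot (k *: u) w = k * dot u w.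
Proof. by rewrite /dot linearZ -scalemxAl mxE. Qed.

Lemma dotNl n (u w : 'cV[R]_n) : dot (- u) w = - dot u w.
Proof. by rewrite -scaleN1r dotZl mulN1r. Qed.

Lemma dotBl n (u v w : 'cV[R]_n) : dot (u - v) w = dot u w - dot v w.
Proof. by rewrite dotDl dotNl. Qed.

Lemma dot0l n (w : 'cV[R]_n) : dot 0 w = 0.
Proof. by rewrite -(scale0r 0) dotZl mul0r. Qed.

Lemma dotZr n k (u w : 'cV[R]_n) : dot w (k *: u) = k * dot w u.
Proof. by rewrite dotC dotZl dotC. Qed.

Lemma dotBr n (u v w : 'cV[R]_n) : dot w (u - v) = dot w u - dot w v.
Proof. by rewrite dotC dotBl !(dotC w). Qed.

Lemma dot_trmx_mul m n (M : 'M[R]_(m, n)) u v : dot (M^T *m u) v = dot u (M *m v).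
Proof. by rewrite /dot trmx_mul trmxK mulmxA. Qed.

Lemma dot_row m n (M : 'M[R]_(m, n)) i v : dot (row i M)^T v = (M *m v) i 0.
Proof. by rewrite /dot trmxK -row_mul mxE. Qed.

Lemma dot_gt0 n (u : 'cV[R]_n) : u != 0 -> 0 < dot u u.
Proof.
move=> /eqP u_nz; have sq_ge0 i : 0 <= u i 0 * u i 0 by rewrite -expr2 sqr_ge0.
rewrite dotE lt_def psumr_eq0 ?sumr_ge0 // andbT.
apply: contra_notN u_nz => /allP u0; apply/matrixP => i j; rewrite (ord1 j) mxE.
by have /implyP/(_ isT) := u0 i (mem_index_enum _); rewrite mulf_eq0 orbb => /eqP.
Qed.

End Dot.

Section Farkas.
Variables (R : realFieldType) (n : nat).
Implicit Types (a d g u v x : 'cV[R]_n) (s : seq 'cV[R]_n).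

Fixpoint in_cone s g : Prop :=
  if s is a :: s' then exists2 t, 0 <= t & in_cone s' (g - t *: a) else g = 0.

(* [dot a d] times the projection onto the hyperplane orthogonal to [d], along [a] *)
Definition proj_along a d x := dot a d *: x - dot x d *: a.

Lemma proj_alongDZ a d k u v :
  proj_along a d (u + k *: v) = proj_along a d u + k *: proj_along a d v.
Proof.
rewrite /proj_along dotDl dotZl; apply/matrixP => i j; rewrite !mxE; ring.
Qed.

Lemma proj_along0 a d : proj_along a d 0 = 0.
Proof. by rewrite /proj_along dot0l scale0r scaler0 subrr. Qed.

Lemma proj_along_eq0 a d x : dot a d != 0 ->
  proj_along a d x = 0 -> x = (dot x d / dot a d) *: a.
Proof.
move=> ad_nz /eqP; rewrite subr_eq0 => /eqP ax.
by apply: (scalerI ad_nz); rewrite scalerA mulrCA divff // mulr1.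
Qed.

Lemma in_cone_proj_along a d s y : in_cone (map (proj_along a d) s) y ->
  exists2 u, in_cone s u & y = proj_along a d u.
Proof.
elim: s y => [|b s IH] y /=; first by move=> ->; exists 0; rewrite ?proj_along0.
case=> t t_ge0 /IH [u u_cone yE]; exists (u + t *: b).
  by exists t; rewrite ?addrK.
by rewrite proj_alongDZ -yE subrK.
Qed.

Lemma in_cone_dot_le0 s d u : (forall a, a \in s -> dot a d <= 0) ->
  in_cone s u -> dot u d <= 0.
Proof.
elim: s u => [|a s IH] u /= s_le0; first by move=> ->; rewrite dot0l.
have s'_le0 x : x \in s -> dot x d <= 0 by move=> x_s; rewrite s_le0 // inE x_s orbT.
case=> t t_ge0 /(IH _ s'_le0); rewrite dotBl dotZl.
have : t * dot a d <= 0 by rewrite mulr_ge0_le0 ?s_le0 ?mem_head.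
lra.
Qed.

(* If the separator [d] of the tail [s] fails for the head [a], project [s]
   and [g] along [a] onto the hyperplane orthogonal to [d] and recurse. *)
Theorem farkas s g :
  in_cone s g \/ exists d, (forall a, a \in s -> dot a d <= 0) /\ 0 < dot g d.
Proof.
move: {2}(size s) (erefl (size s)) => N; elim: N s g => [|N IH] [|a s] g //=.
  move=> _; have [->|g_nz] := eqVneq g 0; first by left.
  by right; exists g; split => //; exact: dot_gt0.
case=> size_s; have [g_cone|[d [s_le0 gd_gt0]]] := IH s g size_s.
  by left; exists 0; rewrite ?scale0r ?subr0.
have [ad_le0|ad_gt0] := lerP (dot a d) 0.
  by right; exists d; split => // x; rewrite inE => /predU1P[->|/s_le0].
have ad_nz : dot a d != 0 by rewrite gt_eqF.
have size_proj : size (map (proj_along a d) s) = N by rewrite size_map.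
have [/in_cone_proj_along [u u_cone gE]|[d' [s_le0' gd'_gt0]]] :=
  IH _ (proj_along a d g) size_proj.
  have ud_le0 := in_cone_dot_le0 s_le0 u_cone.
  have /proj_along_eq0 gu : proj_along a d (g - u) = 0.
    by rewrite -scaleN1r proj_alongDZ -gE scaleN1r subrr.
  left; exists (dot (g - u) d / dot a d).
    by rewrite divr_ge0 ?ltW // dotBl; lra.
  by rewrite -gu // opprB addrC subrK.
right; exists (d' - (dot a d' / dot a d) *: d).
have dot_sep x : dot x (d' - (dot a d' / dot a d) *: d) = dot (proj_along a d x) d' / dot a d.
  by rewrite dotBr dotZr /proj_along dotBl !dotZl; field.
split; last by rewrite dot_sep divr_gt0.
move=> x; rewrite inE dot_sep => /predU1P[->|x_s].
  by rewrite /proj_along subrr dot0l mul0r.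
by rewrite pmulr_lle0 ?invr_gt0 // s_le0' // map_f.
Qed.

End Farkas.

Lemma descent_step (R : realFieldType) (a q e0 : R) : a < 0 -> 0 < e0 ->
  exists e, [/\ 0 < e, e <= e0 & e * a + e ^+ 2 / 2 * q < 0].
Proof.
move=> a_lt0 e0_gt0; set r := - a / (`|q| + 1).
have r_gt0 : 0 < r by rewrite divr_gt0 ?oppr_gt0 ?ltr_wpDl.
set e := Order.min e0 r.
have e_gt0 : 0 < e by rewrite lt_min e0_gt0.
have e_le_r : e <= r by rewrite ge_min lexx orbT.
exists e; split; rewrite ?ge_min ?lexx //.
have eq_lt_a : e * `|q| < - a.
  have : r * (`|q| + 1) = - a by rewrite /r divfK // gt_eqF // ltr_wpDl.
  have := ler_wpM2r (normr_ge0 q) e_le_r; nra.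
have := ler_norm q; have := ler_wpM2l (ltW e_gt0) (ler_norm q); nra.
Qed.

Section KKT.
Variables (R : realType) (m n : nat) (Q : 'M[R]_n) (A : 'M[R]_(m, n)).
Hypothesis Q_sym : Q^T = Q.

Definition kkt_multiplier (b : 'cV[R]_m) (c x : 'cV[R]_n) (lam : 'cV[R]_m) : Prop :=
  [/\ forall i, 0 <= lam i 0,
      forall i, lam i 0 != 0 -> (A *m x) i 0 = b i 0
    & Q *m x + c + A^T *m lam = 0].

Lemma qp_objDZ c x d e : qp_obj Q c (x + e *: d) =
  qp_obj Q c x + e * dot (Q *m x + c) d + e ^+ 2 / 2 * (d^T *m Q *m d) 0 0.
Proof.
have cross : (d^T *m Q *m x) 0 0 = (x^T *m Q *m d) 0 0.
  have <- : (d^T *m Q *m x)^T = x^T *m Q *m d by rewrite !trmx_mul trmxK Q_sym mulmxA.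
  by rewrite [RHS]mxE.
rewrite /qp_obj /dot !linearD /= !linearZ /= trmx_mul Q_sym.
rewrite !mulmxDl -!scalemxAl.
move: cross; set xQx := x^T *m Q *m x; set xQd := x^T *m Q *m d.
set dQx := d^T *m Q *m x; set dQd := d^T *m Q *m d; set cx := c^T *m x; set cd := c^T *m d.
by rewrite !mxE => ->; field.
Qed.

Lemma feasible_along b x d : qp_feasible A b x ->
  (forall i, (A *m x) i 0 = b i 0 -> (A *m d) i 0 <= 0) ->
  exists2 e0, 0 < e0 & forall e, 0 <= e <= e0 -> qp_feasible A b (x + e *: d).
Proof.
move=> x_feas active_le0.
pose h i := if 0 < (A *m d) i 0 then (b i 0 - (A *m x) i 0) / (A *m d) i 0 else 1.
exists (\big[Order.min/1]_i h i).
  apply: lt_bigmin => // i _; rewrite /h; case: ifP => // Ad_gt0.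
  rewrite divr_gt0 // subr_gt0 lt_def x_feas andbT.
  by apply: contraTneq Ad_gt0 => /esym/active_le0; rewrite -leNgt.
move=> e /andP[e_ge0 e_le] i; rewrite mulmxDr -scalemxAr mxE [X in _ + X]mxE.
have := le_trans e_le (bigmin_le _ i _); rewrite /h.
case: ifP => [Ad_gt0|/negbT]; first by rewrite ler_pdivlMr // => ?; lra.
rewrite -leNgt => Ad_le0 _; have := x_feas i.
have : e * (A *m d) i 0 <= 0 by rewrite mulr_ge0_le0.
lra.
Qed.

Lemma in_cone_rows (r : seq 'I_m) g : in_cone [seq (row i A)^T | i <- r] g ->
  exists lam : 'cV[R]_m, [/\ forall i, 0 <= lam i 0,
    forall i, lam i 0 != 0 -> i \in r & g = A^T *m lam].
Proof.
elim: r g => [|i r IH] g /=.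
  by move=> ->; exists 0; split => [j|j|]; rewrite ?mxE ?eqxx ?mulmx0.
case=> t t_ge0 /IH [lam [lam_ge0 lam_supp gE]].
exists (lam + t *: delta_mx i 0); split => [j|j|].
- by rewrite !mxE addr_ge0 ?mulr_ge0.
- rewrite !mxE inE; have [//|ji /=] := eqVneq j i.
  by rewrite mulr0 addr0 => /lam_supp.
- by rewrite mulmxDr -scalemxAr -colE -tr_row -gE subrK.
Qed.

Lemma optimal_kkt b c x : qp_optimal Q A b c x ->
  exists lam, kkt_multiplier b c x lam.
Proof.
move=> [x_feas x_opt]; set g := Q *m x + c.
set active := [seq i <- enum 'I_m | (A *m x) i 0 == b i 0].
have [/in_cone_rows [lam [lam_ge0 lam_supp gE]]|[d [active_le0 gd_gt0]]] :=
  farkas [seq (row i A)^T | i <- active] (- g).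
  exists lam; split => // [i /lam_supp|]; first by rewrite mem_filter => /andP[/eqP].
  by rewrite -gE subrr.
have Ad_le0 i : (A *m x) i 0 = b i 0 -> (A *m d) i 0 <= 0.
  move=> act; rewrite -dot_row; apply/active_le0/map_f.
  by rewrite mem_filter act eqxx mem_enum.
have [e0 e0_gt0 x_feas'] := feasible_along x_feas Ad_le0.
rewrite dotNl oppr_gt0 in gd_gt0.
have [e [e_gt0 e_le descent]] := descent_step ((d^T *m Q *m d) 0 0) gd_gt0 e0_gt0.
have e_range : 0 <= e <= e0 by rewrite (ltW e_gt0) e_le.
have := x_opt _ (x_feas' e e_range); rewrite qp_objDZ -/g.
lra.
Qed.

Lemma kkt_optimal b c x lam : (forall d : 'cV[R]_n, 0 <= (d^T *m Q *m d) 0 0) ->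
  qp_feasible A b x -> kkt_multiplier b c x lam -> qp_optimal Q A b c x.
Proof.
move=> Q_psd x_feas [lam_ge0 slack stat]; split => // y y_feas.
have -> : y = x + 1 *: (y - x) by rewrite scale1r addrC subrK.
rewrite qp_objDZ expr1n !mul1r.
have -> : Q *m x + c = - (A^T *m lam) by apply/eqP; rewrite -addr_eq0 stat.
rewrite dotNl dot_trmx_mul dotE.
have : \sum_i lam i 0 * (A *m (y - x)) i 0 <= 0.
  apply: sumr_le0 => i _; rewrite mulmxBr [X in _ * X]mxE [X in _ + X]mxE.
  have [->|/slack act] := eqVneq (lam i 0) 0; first by rewrite mul0r.
  by rewrite act mulr_ge0_le0 // subr_le0.
have := Q_psd (y - x); lra.
Qed.

End KKT.

Lemma ratio_test (R : realFieldType) m (lam delta : 'cV[R]_m) :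
  (forall i, 0 <= lam i 0) -> (forall i, 0 <= delta i 0) -> delta != 0 ->
  exists k s, [/\ 0 < delta k 0, s <= 0, lam k 0 + s * delta k 0 = 0
                & forall i, 0 <= lam i 0 + s * delta i 0].
Proof.
move=> lam_ge0 delta_ge0 delta_nz.
have /existsP [i0 delta_i0] : [exists i, 0 < delta i 0].
  apply: contraNT delta_nz => /existsPn delta_le0.
  apply/eqP/matrixP => i j; rewrite (ord1 j) mxE.
  by apply/le_anti; rewrite delta_ge0 andbT leNgt delta_le0.
have [k delta_k k_min] :=
  arg_minP (fun i => lam i 0 / delta i 0) (P := fun i => 0 < delta i 0) delta_i0.
exists k, (- (lam k 0 / delta k 0)); split => //.
- by rewrite oppr_le0 divr_ge0 ?lam_ge0 ?ltW.
- by rewrite mulNr divfK ?gt_eqF ?subrr.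
move=> i; rewrite mulNr subr_ge0; have [delta_i|] := ltP 0 (delta i 0).
  by rewrite -ler_pdivlMr ?k_min.
move=> delta_i_le0; have -> : delta i 0 = 0 by apply/le_anti; rewrite delta_i_le0 delta_ge0.
by rewrite mulr0.
Qed.

Section Concealment.
Variables (R : realType) (m n : nat) (Q : 'M[R]_n) (A : 'M[R]_(m, n)).
Variables (b lam delta : 'cV[R]_m) (c x : 'cV[R]_n).
Hypotheses (Q_sym : Q^T = Q) (Q_psd : forall d : 'cV[R]_n, 0 <= (d^T *m Q *m d) 0 0).
Hypotheses (x_feas : qp_feasible A b x) (lam_kkt : kkt_multiplier Q A b c x lam).
Hypothesis delta_ge0 : forall i, 0 <= delta i 0.

Lemma optimal_shift b' s : qp_feasible A b' x ->
  (forall i, 0 <= lam i 0 + s * delta i 0) ->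
  (forall i, lam i 0 + s * delta i 0 != 0 -> (A *m x) i 0 = b' i 0) ->
  qp_optimal Q A b' (c - s *: (A^T *m delta)) x.
Proof.
move=> x_feas' mu_ge0 slack'.
apply: (kkt_optimal Q_sym (lam := lam + s *: delta)) => //.
have [_ _ stat] := lam_kkt.
have muE i : (lam + s *: delta) i 0 = lam i 0 + s * delta i 0 by rewrite !mxE.
split => [i|i|]; rewrite ?muE; [exact: mu_ge0 | exact: slack' |].
by rewrite mulmxDr -scalemxAr addrACA subrK addrAC stat.
Qed.

Lemma cost_shift_eq s j : (A^T *m delta) j 0 = 0 ->
  (c - s *: (A^T *m delta)) j 0 = c j 0.
Proof. by move=> Y0; rewrite mxE [X in _ + X]mxE [X in - X]mxE Y0 mulr0 subr0. Qed.

Lemma rhs_not_unique : delta != 0 ->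
  exists (b' : 'cV[R]_m) (c' : 'cV[R]_n), b' != b /\
  (forall i, delta i 0 = 0 -> b' i 0 = b i 0) /\
  (forall j, (A^T *m delta) j 0 = 0 -> c' j 0 = c j 0) /\ qp_optimal Q A b' c' x.
Proof.
move=> delta_nz; have [lam_ge0 slack _] := lam_kkt.
have [k [s [delta_k s_le0 mu_k0 mu_ge0]]] := ratio_test lam_ge0 delta_ge0 delta_nz.
set b' := b + delta_mx k 0.
have b'E i : i != k -> b' i 0 = b i 0 by move=> /negPf ik; rewrite !mxE ik addr0.
exists b', (c - s *: (A^T *m delta)).
split; [|split; [|split]].
- by apply/eqP => /matrixP/(_ k 0); rewrite !mxE !eqxx /=; lra.
- move=> i delta_i0; apply: b'E.
  by apply: contraTneq delta_k => <-; rewrite delta_i0 ltxx.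
- by move=> j; apply: cost_shift_eq.
apply: optimal_shift => [i|//|i mu_nz].
  by apply: le_trans (x_feas i) _; rewrite !mxE lerDl ler0n.
have ik : i != k by apply: contraNneq mu_nz => ->; rewrite mu_k0.
rewrite b'E //; apply: slack; apply: contraNneq mu_nz => lam_i0.
have := mu_ge0 i; rewrite lam_i0 !add0r eq_le => ->.
by rewrite mulr_le0_ge0.
Qed.

Lemma cost_not_unique : A^T *m delta != 0 ->
  exists (c' : 'cV[R]_n) (b' : 'cV[R]_m), c' != c /\
  (forall i, delta i 0 = 0 -> b' i 0 = b i 0) /\
  (forall j, (A^T *m delta) j 0 = 0 -> c' j 0 = c j 0) /\ qp_optimal Q A b' c' x.
Proof.
move=> Y_nz; have [lam_ge0 slack _] := lam_kkt.
exists (c - 1 *: (A^T *m delta)), (\col_i (if delta i 0 == 0 then b i 0 else (A *m x) i 0)).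
split; [|split; [|split]].
- by rewrite scale1r -subr_eq0 addrAC subrr add0r oppr_eq0.
- by move=> i delta_i0; rewrite mxE delta_i0 eqxx.
- by move=> j; apply: cost_shift_eq.
apply: optimal_shift => [i|i|i].
- by rewrite [X in _ <= X]mxE; case: ifP => // _; apply: x_feas.
- by rewrite mul1r addr_ge0.
rewrite mul1r [RHS]mxE; case: ifP => [/eqP-> | //].
by rewrite addr0; apply: slack.
Qed.

End Concealment.

Unset Implicit Arguments.

Theorem proposition3 (R : realType) (m n : nat) (hm : (1 <= m)%N) (hn : (1 <= n)%N)
  (Q : 'M[R]_n) (A : 'M[R]_(m, n)) (b : 'cV[R]_m) (c : 'cV[R]_n)
  (xs : 'cV[R]_n) (mbar nbar : nat) (hmbar : (mbar <= m)%N) (hnbar : (nbar <= n)%N) :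
  sym_posdef Q ->
  qp_optimal Q A b c xs ->
  (mbar < m)%N ->
  forall delta : 'cV[R]_m,
    (* delta is the zero-extension of a vector of R^(m - mbar) indexed by rows mbar..m-1 *)
    (forall i : 'I_m, (i < mbar)%N -> delta i 0 = 0) ->
    delta != 0 ->
    (forall i : 'I_m, 0 <= delta i 0) ->
    (* A21^T delta = 0 *)
    (forall j : 'I_n, (j < nbar)%N -> \sum_(i < m) A i j * delta i 0 = 0) ->
    (exists (b' : 'cV[R]_m) (c' : 'cV[R]_n),
        b' != b /\
        (forall i : 'I_m, (i < mbar)%N -> b' i 0 = b i 0) /\
        (forall j : 'I_n, (j < nbar)%N -> c' j 0 = c j 0) /\
        qp_optimal Q A b' c' xs)
    /\
    ((nbar < n)%N ->
     (* A22^T delta <> 0 *)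
     (exists j : 'I_n, (nbar <= j)%N /\ \sum_(i < m) A i j * delta i 0 != 0) ->
     exists (c' : 'cV[R]_n) (b' : 'cV[R]_m),
        c' != c /\
        (forall i : 'I_m, (i < mbar)%N -> b' i 0 = b i 0) /\
        (forall j : 'I_n, (j < nbar)%N -> c' j 0 = c j 0) /\
        qp_optimal Q A b' c' xs).
Proof.
move=> [Q_sym Q_posdef] xs_opt _ delta delta_top delta_nz delta_ge0 A21_delta.
have Q_psd (d : 'cV[R]_n) : 0 <= (d^T *m Q *m d) 0 0.
  by have [->|/Q_posdef/ltW //] := eqVneq d 0; rewrite mulmx0 mxE.
have [lam lam_kkt] := optimal_kkt Q_sym xs_opt.
have AtE j : (A^T *m delta) j 0 = \sum_(i < m) A i j * delta i 0.
  by rewrite mxE; apply: eq_bigr => i _; rewrite mxE.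
have A21E (j : 'I_n) : (j < nbar)%N -> (A^T *m delta) j 0 = 0 by rewrite AtE; exact: A21_delta.
split.
  have [b' [c' [b'_nz [b'E [c'E opt']]]]] :=
    rhs_not_unique Q_sym Q_psd xs_opt.1 lam_kkt delta_ge0 delta_nz.
  exists b', c'; split=> //; split=> [i /delta_top/b'E //|].
  by split=> // k /A21E/c'E.
move=> _ [j [_ A22_delta]].
have Y_nz : A^T *m delta != 0 by apply: contraNneq A22_delta => Y0; rewrite -AtE Y0 mxE.
have [c' [b' [c'_nz [b'E [c'E opt']]]]] :=
  cost_not_unique Q_sym Q_psd xs_opt.1 lam_kkt delta_ge0 Y_nz.
exists c', b'; split=> //; split=> [i /delta_top/b'E //|].
by split=> // k /A21E/c'E.
Qed.
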